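(* Let $k\ge 3$, $K=\{1,\dots,k\}$, $T\subseteq K$ with $|T|=2$, and let $\bm v_1$ be a point of $PG(k-1,q)$ with $\mathrm{supp}(\bm v_1)\cap T=\emptyset$; set $\mathcal V=\{\bm v_1\}$ and $M=X^T\cup Y^T_{\mathcal V}\cup Z^T$. Let $C$ be the code over $\mathbb{F}_q$ with generator matrix $G$ whose columns are representing vectors of the points of $M$, one for each point. Then $C$ is an $[|M|,k]$ code with $d(C^\perp)=3$ and $\gamma(C)=k-1=k-d(C^\perp)+2$.
   Context: Points of $PG(k-1,q)$ are one-dimensional subspaces of $\mathbb{F}_q^k$, identified with any nonzero representing vector; the support $\mathrm{supp}(\bm x)=\{i:x_i\neq0\}$ of a point is well defined. $\bm e_i$ denotes the $i$-th standard unit vector of $\mathbb{F}_q^k$. Define $X^T=\{\bm x\in PG(k-1,q): \mathrm{supp}(\bm x)\cap T=\emptyset\}$; $Y^T_{\mathcal V}=\{\bm x\in PG(k-1,q): |\mathrm{supp}(\bm x)\cap T|=1\}$ minus all points represented by $\bm v_i+\lambda\bm e_j$ with $\bm v_i\in\mathcal V$, $j\in T$, $\lambda\in\mathbb{F}_q\setminus\{0\}$; $Z^T=\{\bm x\in PG(k-1,q): \mathrm{supp}(\bm x)\text{ is a 2-element subset of }T\}$. An $[n,k]$ code over $\mathbb{F}_q$ is a $k$-dimensional subspace $C\subseteq\mathbb{F}_q^n$; $E=\{1,\dots,n\}$; for $B\subseteq\mathbb{F}_q^n$, $\mathrm{Supp}(B)=\bigcup_{\bm x\in B}\mathrm{supp}(\bm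 x)$. $C^\perp$ is the dual code with respect to the standard inner product and $d(C^\perp)$ is the minimum weight (number of nonzero coordinates) of a nonzero codeword of $C^\perp$. The covering dimension is $\gamma(C)=\infty$ if $\mathrm{Supp}(C)\neq E$, and otherwise $\gamma(C)$ is the least positive integer $r$ such that $C$ has an $r$-dimensional subspace $D$ with $\mathrm{Supp}(D)=E$. *)

From HB Require Import structures.
From mathcomp Require Import all_boot all_order all_algebra.
Set Implicit Arguments. Unset Strict Implicit. Unset Printing Implicit Defensive.
Import GRing.Theory.
Local Open Scope ring_scope.

Section Defs.
Variable F : finFieldType.

Definition supp (k : nat) (x : 'rV[F]_k) : {set 'I_k} := [set i | x 0 i != 0].

Definition wt (n : nat) (y : 'rV[F]_n) : nat := #|supp y|.

Definition unitv (k : nat) (i : 'I_k) : 'rV[F]_k := delta_mx 0 i.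

(* The projective point (one-dimensional subspace) spanned by x,
   represented canonically by the mxalgebra generator <<x>>. *)
Definition point (k : nat) (x : 'rV[F]_k) : 'M[F]_k := (<<x>>)%MS.

Definition inX (k : nat) (T : {set 'I_k}) (x : 'rV[F]_k) : bool :=
  (x != 0) && [disjoint supp x & T].

Definition inY (k : nat) (T : {set 'I_k}) (V : {set 'rV[F]_k}) (x : 'rV[F]_k) : bool :=
  [&& x != 0, #|supp x :&: T| == 1%N &
   ~~ [exists v in V, exists j in T, exists l : F,
        (l != 0) && (point x == point (v + l *: unitv j))]].

Definition inZ (k : nat) (T : {set 'I_k}) (x : 'rV[F]_k) : bool :=
  (supp x \subset T) && (#|supp x| == 2%N).

Definition Mset (k : nat) (T : {set 'I_k}) (V : {set 'rV[F]_k}) : {set 'M[F]_k} :=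
  [set point x | x in [set x : 'rV[F]_k | [|| inX T x, inY T V x | inZ T x]]].

(* Code C = row space of G : 'M_(k,n); dual code = {y | G y^T = 0}.
   Minimum distance of the dual code (n.+1 acts as "infinity" if the dual is trivial). *)
Definition dual_dist (k n : nat) (G : 'M[F]_(k, n)) : nat :=
  \big[minn/n.+1]_(y : 'rV[F]_n | (G *m y^T == 0) && (y != 0)) wt y.

(* Supp(D) = E for the subspace spanned by the rows of D *)
Definition supp_full (m n : nat) (D : 'M[F]_(m, n)) : bool :=
  [forall i : 'I_n, [exists x : 'rV[F]_n, (x <= D)%MS && (x 0 i != 0)]].

Definition cov_ok (k n : nat) (G : 'M[F]_(k, n)) (r : nat) : bool :=
  (0 < r)%N && [exists D : 'M[F]_n, [&& (D <= G)%MS, \rank D == r & supp_full D]].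

(* Covering dimension; None stands for infinity. Any subspace has dimension <= n,
   so the least r is searched in 0..n. *)
Definition gamma (k n : nat) (G : 'M[F]_(k, n)) : option nat :=
  if supp_full G then Some (\big[minn/n.+1]_(r < n.+1 | cov_ok G r) (r : nat))
  else None.

End Defs.

From HB Require Import structures.
From mathcomp Require Import all_boot all_order all_algebra.
From mathcomp Require Import ring zify.
Import GRing.Theory.
Local Open Scope ring_scope.

Set Implicit Arguments. Unset Strict Implicit. Unset Printing Implicit Defensive.

(* Write T = {a, b}.  Every unit vector is a point of M, so G has rank k.  The columns of G
   are nonzero and pairwise non-proportional, so nonzero dual codewords have weight at least 3,
   and the points e_a, e_b, e_a + e_b of M are dependent, which gives one of weight 3.
   For the covering dimension: v1 + e_a is not a point of M, so no column of G is annihilated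
   by the hyperplane orthogonal to it, and that hyperplane maps onto a covering subcode of
   dimension k - 1.  Conversely, a covering subcode B G of dimension at most k - 2 leaves a
   subspace ker B^T of dimension at least 2 containing no column of G; but every plane of F^k
   meets M, either in a vector vanishing on T or in a combination supported exactly on T. *)

Lemma bigminn_eq (I : finType) (P : pred I) (f : I -> nat) (x0 v : nat) (i0 : I) :
  P i0 -> f i0 = v -> (v <= x0)%N -> (forall i, P i -> v <= f i)%N ->
  \big[minn/x0]_(i | P i) f i = v.
Proof.
move=> Pi0 fi0 vx0 minv; apply/eqP; rewrite eqn_leq; apply/andP; split.
  by have := Order.TotalTheory.bigmin_le_cond x0 f Pi0; rewrite minEnat leEnat fi0.
by elim/big_ind: _ => // x y vx vy; rewrite leq_min vx vy.
Qed.

Section LinearAlgebra.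
Variable F : finFieldType.

Lemma mulmx_col_entry m p q (A : 'M[F]_(m, p)) (B : 'M[F]_(p, q)) i j :
  (A *m B) i j = (A *m col j B) i 0.
Proof. by rewrite !mxE; apply: eq_bigr => l _; rewrite mxE. Qed.

Lemma kermx_tr_sub m p k (A : 'M[F]_(m, k)) (B : 'M[F]_(p, k)) :
  (kermx A^T <= kermx B^T)%MS -> (B <= A)%MS.
Proof.
(* The annihilator of col_mx A B contains that of A, so adding the rows of B keeps the rank. *)
move=> sKAB; have sA : (A <= col_mx A B)%MS by rewrite -addsmxE addsmxSl.
have sK : (kermx A^T <= kermx (col_mx A B)^T)%MS.
  rewrite sub_kermx tr_col_mx mul_mx_row mulmx_ker.
  by move: sKAB; rewrite sub_kermx => /eqP ->; rewrite row_mx0.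
have : (\rank (col_mx A B) <= \rank A)%N.
  move: (mxrankS sK); rewrite !mxrank_ker !mxrank_tr.
  by have := rank_leq_col A; have := rank_leq_col (col_mx A B); lia.
rewrite leq_eqVlt ltnNge mxrankS // orbF eq_sym (mxrank_leqif_sup sA).2.
by rewrite -addsmxE addsmx_sub => /andP [].
Qed.

Lemma ker_or_onto k m (W : 'M[F]_k) (P : 'M[F]_(k, m)) : (m <= \rank W)%N ->
  (exists2 u : 'rV_k, (u <= W)%MS & (u != 0) && (u *m P == 0)) \/
  (forall z : 'rV_m, exists2 u : 'rV_k, (u <= W)%MS & u *m P = z).
Proof.
move=> rW; have := mxrank_mul_ker W P.
have [r0 | rpos] := posnP (\rank (W :&: kermx P)).
  rewrite r0 addn0 => rWP; right => z.
  have : (z <= W *m P)%MS by apply: submx_full; rewrite /row_full eqn_leq rank_leq_col rWP.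
  by case/submxP => y ->; exists (y *m W); rewrite ?submxMl ?mulmxA.
move=> _; left.
have : (W :&: kermx P)%MS != 0 by rewrite -mxrank_eq0 -lt0n.
case/rowV0Pn => u uWK u0; exists u; first exact: submx_trans uWK (capmxSl _ _).
by rewrite u0 -sub_kermx (submx_trans uWK) ?capmxSr.
Qed.

End LinearAlgebra.

Section Points.
Variables (F : finFieldType) (k : nat).
Implicit Types (x y : 'rV[F]_k) (T : {set 'I_k}) (V : {set 'rV[F]_k}).

Definition inM T V x := [|| inX T x, inY T V x | inZ T x].

Lemma point_scale x (mu : F) : mu != 0 -> point (mu *: x) = point x.
Proof. by move=> mu0; apply/genmxP/eqmxP; apply: eqmx_scale. Qed.

Lemma point_eq_scale x y : point x = point y -> exists mu, x = mu *: y.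
Proof. by move/genmxP/andP => [/sub_rVP]. Qed.

Lemma supp_scale x (mu : F) : mu != 0 -> supp (mu *: x) = supp x.
Proof. by move=> mu0; apply/setP => i; rewrite !inE mxE mulf_eq0 negb_or mu0. Qed.

Lemma supp0 : supp (0 : 'rV[F]_k) = set0.
Proof. by apply/setP => i; rewrite !inE mxE eqxx. Qed.

Lemma supp_unitv (i : 'I_k) : supp (unitv F i) = [set i].
Proof.
by apply/setP => j; rewrite !inE mxE eqxx /=; case: (j == i); rewrite ?oner_eq0 ?eqxx.
Qed.

Lemma supp_disjoint_eq0 x T i : [disjoint supp x & T] -> i \in T -> x 0 i = 0.
Proof. by move=> dxT iT; apply/eqP; move: (disjointFl dxT iT); rewrite inE => /negbFE. Qed.

Lemma inM_scale T V x (mu : F) : mu != 0 -> inM T V (mu *: x) = inM T V x.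
Proof.
by move=> mu0; rewrite /inM /inX /inY /inZ supp_scale // point_scale // scaler_eq0 (negbTE mu0).
Qed.

Lemma inM_neq0 T V x : inM T V x -> x != 0.
Proof.
case/or3P => [/andP [] | /and3P [] | /andP [_]] //.
by apply: contraL => /eqP ->; rewrite supp0 cards0.
Qed.

Lemma MsetP T V x : (point x \in Mset T V) = inM T V x.
Proof.
apply/imsetP/idP => [[y] | Mx]; last by exists x; rewrite ?inE.
rewrite inE => My /genmxP /andP [/sub_rVP [mu ->] yx].
have mu0 : mu != 0.
  apply: contraTneq yx => ->; rewrite scale0r.
  by apply: contraL (inM_neq0 My) => /submx0null ->; rewrite eqxx.
by rewrite (inM_scale _ _ _ mu0).
Qed.

End Points.

Section Codes.
Variables (F : finFieldType) (k n : nat) (G : 'M[F]_(k, n)).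

Lemma supp_fullP m (D : 'M[F]_(m, n)) : reflect (forall j, col j D != 0) (supp_full D).
Proof.
apply: (iffP forallP) => [full j | Dnz j].
  have /existsP [_ /andP [/submxP [y ->] yDj]] := full j.
  by apply: contraNneq yDj => Dj0; rewrite mulmx_col_entry Dj0 mulmx0 mxE.
have /matrix0Pn [i [l]] := Dnz j; rewrite (ord1 l) mxE => Dij.
by apply/existsP; exists (row i D); rewrite row_sub mxE.
Qed.

Lemma supp_full_genmx m (D : 'M[F]_(m, n)) : supp_full <<D>>%MS = supp_full D.
Proof. by apply: eq_forallb => j; apply: eq_existsb => x; rewrite genmxE. Qed.

Lemma rank_full_of_unitv : (forall i, exists j, (unitv F i <= (col j G)^T)%MS) -> \rank G = k.
Proof.
move=> unitvG; apply/eqP; rewrite eqn_leq rank_leq_row -mxrank_tr -{1}(mxrank1 F k).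
apply/mxrankS/row_subP => i; rewrite row1; have [j eiG] := unitvG i.
by apply: submx_trans eiG _; rewrite tr_col row_sub.
Qed.

Lemma cov_ok_hyperplane (w : 'rV[F]_k) : (1 < k)%N -> row_free G -> w != 0 ->
  (forall j, ~~ ((col j G)^T <= w)%MS) -> cov_ok G (k - 1).
Proof.
move=> k_gt1 freeG w0 Gw; pose K := kermx w^T.
apply/andP; split; first by rewrite subn_gt0.
apply/existsP; exists <<K *m G>>%MS.
rewrite genmxE submxMl mxrank_gen mxrankMfree // mxrank_ker mxrank_tr rank_rV w0 eqxx.
rewrite supp_full_genmx; apply/supp_fullP => j; rewrite colE -mulmxA -colE.
apply: contra (Gw j) => /eqP KGj; apply: kermx_tr_sub.
by rewrite sub_kermx trmxK KGj.
Qed.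

Lemma cov_ok_lb s r :
  (forall W : 'M[F]_k, (s <= \rank W)%N -> exists j, ((col j G)^T <= W)%MS) ->
  cov_ok G r -> (k < r + s)%N.
Proof.
move=> meetG /andP [_ /existsP [D /and3P [DG /eqP rD /supp_fullP Dfull]]].
pose B := D *m pinvmx G; have BG : B *m G = D := mulmxKpV DG.
rewrite ltnNge; apply/negP => krs.
have [j] : exists j, ((col j G)^T <= kermx B^T)%MS.
  apply: meetG; rewrite mxrank_ker mxrank_tr.
  have rB : (\rank B <= r)%N by rewrite -rD mxrankM_maxl.
  lia.
rewrite sub_kermx -trmx_mul trmx_eq0 => /eqP Bj.
by have := Dfull j; rewrite -BG colE -mulmxA -colE Bj eqxx.
Qed.

Lemma gamma_min r : supp_full G -> cov_ok G r -> (forall r', cov_ok G r' -> r <= r')%N ->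
  gamma G = Some r.
Proof.
move=> fullG Gr rmin; rewrite /gamma fullG; congr Some.
have rn : (r < n.+1)%N.
  by case/andP: Gr => _ /existsP [D /and3P [_ /eqP <- _]]; rewrite ltnS rank_leq_col.
by apply: (bigminn_eq (i0 := Ordinal rn)) => // [|[r' /= _] /rmin //]; exact: ltnW.
Qed.

Lemma dual_dist_min (y : 'rV[F]_n) : G *m y^T = 0 -> y != 0 ->
  (forall y' : 'rV[F]_n, G *m y'^T = 0 -> y' != 0 -> (wt y <= wt y')%N) -> dual_dist G = wt y.
Proof.
move=> Gy y0 ymin; apply: (bigminn_eq (i0 := y)); rewrite ?Gy ?eqxx //.
  by apply: leq_trans (max_card _) _; rewrite card_ord.
by move=> y' /andP [/eqP Gy' y'0]; exact: ymin.
Qed.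

Lemma dual_wt_ge3 (y : 'rV[F]_n) :
  (forall j, (col j G)^T != 0) -> injective (fun j => point (col j G)^T) ->
  G *m y^T = 0 -> y != 0 -> (3 <= wt y)%N.
Proof.
move=> Gnz Ginj Gy y0.
have yG : \sum_(j in supp y) y 0 j *: (col j G)^T = 0.
  apply: trmx_inj; rewrite trmx0 -Gy -[G](trmxK) -trmx_mul; congr _^T.
  rewrite mulmx_sum_row big_mkcond; apply: eq_bigr => j _; rewrite inE tr_col.
  by rewrite trmxK; case: (eqVneq (y 0 j) 0) => [->|]; rewrite ?scale0r ?eqxx.
have supp_nz j : j \in supp y -> y 0 j != 0 by rewrite inE.
have /rV0Pn [j yj] := y0.
have : (0 < #|supp y|)%N by apply/card_gt0P; exists j; rewrite inE.
rewrite /wt; have [//|] := leqP 3 #|supp y|.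
rewrite ltnS leq_eqVlt ltnS leq_eqVlt ltnS leqn0.
case/or3P => [/cards2P [j1 [j2 [j12 y12]]] | /cards1P [j1 y1] | /eqP ->] // _.
  move: yG (supp_nz j1) (supp_nz j2); rewrite y12 big_setU1 ?inE //= big_set1 !eqxx orbT /=.
  move=> /addr0_eq yG /(_ isT) y1 /(_ isT) y2.
  case/negP: j12; apply/eqP/Ginj => /=.
  by rewrite -[RHS](point_scale _ y2) -yG -scaleNr point_scale // oppr_eq0.
move: yG (supp_nz j1); rewrite y1 big_set1 set11 => /eqP.
by rewrite scaler_eq0 (negbTE (Gnz j1)) orbF => /eqP -> /(_ isT); rewrite eqxx.
Qed.

Lemma dual_codeword_of_relation (j1 j2 j3 : 'I_n) (al be ga : F) :
  j1 != j2 -> j1 != j3 -> al != 0 ->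
  al *: (col j1 G)^T + be *: (col j2 G)^T + ga *: (col j3 G)^T = 0 ->
  exists y : 'rV[F]_n, [/\ G *m y^T = 0, y != 0 & (wt y <= 3)%N].
Proof.
move=> j12 j13 al0 rel.
pose y : 'rV[F]_n := al *: delta_mx 0 j1 + be *: delta_mx 0 j2 + ga *: delta_mx 0 j3.
have yE i : y 0 i = al *+ (i == j1) + be *+ (i == j2) + ga *+ (i == j3).
  by rewrite !mxE /= !mulr_natr.
exists y; split.
- apply: trmx_inj; rewrite trmx_mul trmxK trmx0 !mulmxDl -!scalemxAl -!rowE -!tr_col.
  exact: rel.
- by apply/rV0Pn; exists j1; rewrite yE eqxx (negbTE j12) (negbTE j13) addr0 addr0.
rewrite /wt (leq_trans (subset_leq_card (_ : supp y \subset [set j1; j2; j3]))) //.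
  apply/subsetP => i; rewrite !inE yE.
  by case: (i == j1); case: (i == j2); case: (i == j3); rewrite ?mulr0n ?addr0 ?eqxx.
by rewrite (leq_trans (leq_card_setU _ _)) // cards1 addn1 ltnS (leq_trans (leq_card_setU _ _)) // !cards1.
Qed.

End Codes.

Section TwoCoordinates.
Variables (F : finFieldType) (k : nat) (a b : 'I_k) (v1 : 'rV[F]_k).
Hypotheses (neq_ab : a != b) (v1_neq0 : v1 != 0) (v1a : v1 0 a = 0) (v1b : v1 0 b = 0).
Local Notation T := [set a; b].
Local Notation inM := (inM T [set v1]).

Lemma v1_eq0_on_T (c : 'I_k) : c \in T -> v1 0 c = 0.
Proof. by rewrite !inE => /orP [] /eqP ->. Qed.

Lemma v1_supp_offT : exists2 m, v1 0 m != 0 & m \notin T.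
Proof.
have /rV0Pn [m v1m] := v1_neq0; exists m => //.
by apply: contraTN v1m => /v1_eq0_on_T ->; rewrite eqxx.
Qed.

Lemma inM_offT (x : 'rV[F]_k) : x != 0 -> x 0 a = 0 -> x 0 b = 0 -> inM x.
Proof.
move=> x0 xa xb; apply/or3P/Or31; rewrite /inX x0 -setI_eq0; apply/eqP/setP => i.
rewrite !inE; apply/negbTE/negP => /andP [xi /orP [] /eqP ei].
  by move: xi; rewrite ei xa eqxx.
by move: xi; rewrite ei xb eqxx.
Qed.

Lemma inM_suppT (x : 'rV[F]_k) : supp x = T -> inM x.
Proof. by move=> sx; apply/or3P/Or33; rewrite /inZ sx subxx cards2 neq_ab. Qed.

Lemma unitv_neq0 (i : 'I_k) : unitv F i != 0.
Proof. by apply/rV0Pn; exists i; rewrite mxE !eqxx oner_eq0. Qed.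

Lemma inM_unitv (i : 'I_k) : inM (unitv F i).
Proof.
have [iT | iT] := boolP (i \in T); last first.
  have ci c : c \in T -> unitv F i 0 c = 0.
    by move=> cT; rewrite mxE /=; case: eqP => // ec; case/negP: iT; rewrite -ec.
  by apply: inM_offT; rewrite ?unitv_neq0 ?ci // !inE eqxx ?orbT.
apply/or3P/Or32; rewrite /inY unitv_neq0 supp_unitv (setIidPl _) ?sub1set // cards1 /=.
apply/negP => /existsP [_ /andP [/set1P -> /existsP [j /andP [jT /existsP [l /andP [_]]]]]].
move=> /eqP /point_eq_scale [mu eE]; have [m v1m mT] := v1_supp_offT.
have mu0 : mu = 0.
  have off c : c \in T -> (m == c) = false by move=> cT; apply: contraNF mT => /eqP ->.
  move/rowP: (eE) => /(_ m); rewrite !mxE /= off // off // mulr0 addr0.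
  by move/esym/eqP; rewrite mulf_eq0 (negbTE v1m) orbF => /eqP.
by move: (unitv_neq0 i); rewrite eE mu0 scale0r eqxx.
Qed.

Lemma notinM_v1_add_unitv : ~~ inM (v1 + unitv F a).
Proof.
have aT : a \in T by rewrite !inE eqxx.
have wa : (v1 + unitv F a) 0 a = 1 by rewrite !mxE v1a !eqxx add0r.
have [m v1m mT] := v1_supp_offT.
apply/negP => /or3P [/andP [_ /supp_disjoint_eq0 /(_ aT)] | /and3P [_ _ /negP []] | /andP [sT _]].
- by rewrite wa => /eqP; rewrite oner_eq0.
- apply/existsP; exists v1; rewrite set11 /=; apply/existsP; exists a; rewrite aT /=.
  by apply/existsP; exists 1; rewrite oner_eq0 scale1r eqxx.
have : m \in supp (v1 + unitv F a).
  have ma : (m == a) = false by apply: contraNF mT => /eqP ->.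
  by rewrite inE !mxE /= ma addr0.
by move/(subsetP sT); apply/negP.
Qed.

Lemma notinM_unit_coord (c d : 'I_k) (x : 'rV[F]_k) : [set c; d] = T ->
  x 0 c = 1 -> x 0 d = 0 -> ~~ inM x -> exists2 mu, mu != 0 & x = mu *: v1 + unitv F c.
Proof.
move=> Tcd xc xd xM; have cT : c \in T by rewrite -Tcd !inE eqxx.
have x0 : x != 0 by apply/rV0Pn; exists c; rewrite xc oner_eq0.
have xT : supp x :&: T = [set c].
  apply/setP => i; rewrite -Tcd !inE; case: (eqVneq i c) => [-> | ic]; first by rewrite xc oner_eq0.
  by case: (eqVneq i d) => [-> | _]; rewrite ?xd ?eqxx ?andbF.
case/norP: xM => _ /norP [+ _]; rewrite /inY x0 xT cards1 /= negbK.
case/existsP => _ /andP [/set1P -> /existsP [j /andP [jT /existsP [l /andP [_]]]]].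
move=> /eqP /point_eq_scale [mu xE].
have xcE : x 0 c = mu * l * (c == j)%:R.
  by rewrite xE !mxE v1_eq0_on_T // add0r mulrA.
have cj : c = j.
  apply/eqP; apply: contraTT (_ : x 0 c != 0) => [/negbTE cj|]; last by rewrite xc oner_eq0.
  by rewrite xcE cj mulr0 eqxx.
have mul1 : mu * l = 1 by rewrite -xc xcE cj eqxx mulr1.
exists mu; first by apply/eqP => mu0; move: mul1; rewrite mu0 mul0r => /eqP; rewrite eq_sym oner_eq0.
by rewrite xE scalerDr scalerA mul1 scale1r cj.
Qed.

Lemma inM_subspace (W : 'M[F]_k) : (2 <= \rank W)%N -> exists2 u, (u <= W)%MS & inM u.
Proof.
move=> rW; pose P : 'M[F]_(k, 1 + 1) := row_mx (delta_mx a 0) (delta_mx b 0).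
have coordP (u : 'rV[F]_k) (z1 z2 : 'M[F]_1) :
    u *m P = row_mx z1 z2 -> u 0 a = z1 0 0 /\ u 0 b = z2 0 0.
  by rewrite mul_mx_row -!colE => /eq_row_mx [<- <-]; rewrite !mxE.
case: (ker_or_onto P rW) => [[u uW /andP [u0 /eqP]] | onto].
  rewrite -row_mx0 => /coordP; rewrite !mxE => -[ua ub].
  by exists u => //; apply: inM_offT.
have [ua uaW /coordP] := onto (row_mx 1 0); rewrite !mxE /= => -[uaa uab].
have [ub ubW /coordP] := onto (row_mx 0 1); rewrite !mxE /= => -[uba ubb].
(* Outside M, ua and ub are v1-translates of e_a and e_b; cancelling v1 lands in Z^T. *)
have [| /(notinM_unit_coord (erefl T) uaa uab) [mu mu0 uaE]] := boolP (inM ua).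
  by exists ua.
have [| /(notinM_unit_coord (setUC _ _) ubb uba) [mu' mu'0 ubE]] := boolP (inM ub).
  by exists ub.
exists (mu' *: ua - mu *: ub); first by rewrite addmx_sub ?eqmx_opp ?scalemx_sub.
apply: inM_suppT; apply/setP => i.
rewrite uaE ubE !inE !mxE /=.
rewrite [X in X != 0](_ : _ = mu' * (i == a)%:R - mu * (i == b)%:R); last by ring.
case: (eqVneq i a) => [-> | _]; first by rewrite (negbTE neq_ab) mulr0 subr0 mulr1.
case: (eqVneq i b) => [_ | _]; last by rewrite !mulr0 subrr eqxx.
by rewrite mulr0 sub0r mulr1 oppr_eq0 mu0.
Qed.

Section CodeOfM.
Variables (n : nat) (G : 'M[F]_(k, n)).
Hypotheses (col_inM : forall j, inM (col j G)^T)
  (col_inj : injective (fun j => point (col j G)^T))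
  (col_onto : forall x, inM x -> exists j, ((col j G)^T == x)%MS).

Lemma col_neq0 j : (col j G)^T != 0.
Proof. exact: inM_neq0 (col_inM j). Qed.

Lemma col_of_inM x : inM x -> exists j mu, mu != 0 /\ (col j G)^T = mu *: x.
Proof.
case/col_onto => j /andP [/sub_rVP [mu cE] _]; exists j, mu; split=> //.
by apply: contraTneq (col_neq0 j) => mu0; rewrite cE mu0 scale0r eqxx.
Qed.

Lemma rank_code_of_M : \rank G = k.
Proof.
apply: rank_full_of_unitv => i.
by have [j /andP [_ eG]] := col_onto (inM_unitv i); exists j.
Qed.

Lemma dual_dist_code_of_M : dual_dist G = 3.
Proof.
have suppT : supp (unitv F a + unitv F b) = T.
  apply/setP => i; rewrite !inE !mxE /=.
  case: (eqVneq i a) => [-> | _]; first by rewrite (negbTE neq_ab) addr0 oner_eq0.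
  by case: (eqVneq i b) => _; rewrite ?add0r ?oner_eq0 ?addr0 ?eqxx.
have [j1 [al [al0 c1]]] := col_of_inM (inM_unitv a).
have [j2 [be [be0 c2]]] := col_of_inM (inM_unitv b).
have [j3 [ga [ga0 c3]]] := col_of_inM (inM_suppT suppT).
have coord_b j mu (x : 'rV[F]_k) : (col j G)^T = mu *: x -> (col j G)^T 0 b = mu * x 0 b.
  by move=> ->; rewrite mxE.
have j1_b0 : (col j1 G)^T 0 b == 0.
  by rewrite (coord_b _ _ _ c1) mxE /= [b == a]eq_sym (negbTE neq_ab) mulr0.
have j12 : j1 != j2.
  by apply: contraTneq j1_b0 => ->; rewrite (coord_b _ _ _ c2) mxE /= eqxx mulr1.
have j13 : j1 != j3.
  apply: contraTneq j1_b0 => ->; rewrite (coord_b _ _ _ c3) !mxE /= eqxx.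
  by rewrite [b == a]eq_sym (negbTE neq_ab) add0r mulr1.
have [y [Gy y0 y3]] : exists y : 'rV[F]_n, [/\ G *m y^T = 0, y != 0 & (wt y <= 3)%N].
  apply: (dual_codeword_of_relation (al := be * ga) (be := al * ga) (ga := - (al * be)) j12 j13).
    exact: mulf_neq0.
  by rewrite c1 c2 c3; apply/rowP => i; rewrite !mxE; ring.
have wy : wt y = 3 by apply/eqP; rewrite eqn_leq y3 (dual_wt_ge3 col_neq0 col_inj Gy y0).
rewrite -wy; apply: dual_dist_min => // y' Gy' y'0; rewrite wy.
exact: dual_wt_ge3 col_neq0 col_inj Gy' y'0.
Qed.

Lemma gamma_code_of_M : gamma G = Some (k - 1)%N.
Proof.
have k_gt1 : (1 < k)%N by have := max_card [set a; b]; rewrite cards2 neq_ab card_ord.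
apply: gamma_min.
- by apply/supp_fullP => j; rewrite -trmx_eq0 col_neq0.
- apply: (cov_ok_hyperplane (w := v1 + unitv F a)) => //.
  + by rewrite /row_free rank_code_of_M.
  + by apply/rV0Pn; exists a; rewrite !mxE v1a !eqxx add0r oner_eq0.
  move=> j; apply/negP => /sub_rVP [mu cE].
  have [mu_eq0 | mu0] := eqVneq mu 0.
    by move: (col_neq0 j); rewrite cE mu_eq0 scale0r eqxx.
  by move: (col_inM j); rewrite cE inM_scale // (negbTE notinM_v1_add_unitv).
move=> r Gr; have meetG (W : 'M[F]_k) : (2 <= \rank W)%N -> exists j, ((col j G)^T <= W)%MS.
  case/inM_subspace => u uW /col_onto [j /andP [cu _]].
  by exists j; apply: submx_trans cu uW.
by have := cov_ok_lb meetG Gr; lia.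
Qed.

End CodeOfM.

End TwoCoordinates.

Theorem mainTheorem18 (F : finFieldType) (k : nat) (T : {set 'I_k})
    (v1 : 'rV[F]_k) (n : nat) (G : 'M[F]_(k, n)) :
  (3 <= k)%N -> #|T| = 2%N ->
  v1 != 0 -> [disjoint supp v1 & T] ->
  (forall j : 'I_n, point (col j G)^T \in Mset T [set v1]) ->
  injective (fun j : 'I_n => point (col j G)^T) ->
  (forall P, P \in Mset T [set v1] -> exists j : 'I_n, point (col j G)^T = P) ->
  [/\ n = #|Mset T [set v1]|, \rank G = k,
      dual_dist G = 3%N,
      gamma G = Some (k - 1)%N
    & gamma G = Some (k - dual_dist G + 2)%N].
Proof.
move=> k3 T2 v10 dv1 colM inj onto.
have /cards2P [a [b [ab defT]]] : #|T| == 2%N by rewrite T2.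
have v1T := supp_disjoint_eq0 dv1; rewrite defT in colM onto v1T *.
have v1a : v1 0 a = 0 by rewrite v1T // !inE eqxx.
have v1b : v1 0 b = 0 by rewrite v1T // !inE eqxx orbT.
have col_inM j : inM [set a; b] [set v1] (col j G)^T by rewrite -MsetP.
have col_onto x : inM [set a; b] [set v1] x -> exists j, ((col j G)^T == x)%MS.
  by rewrite -MsetP => /onto [j /genmxP]; exists j.
have Mcols : Mset [set a; b] [set v1] = [set point (col j G)^T | j in [set: 'I_n]].
  apply/setP => P; apply/idP/imsetP => [/onto [j <-] | [j _ ->] //]; by exists j.
have dd := dual_dist_code_of_M ab v10 v1a v1b col_inM inj col_onto.
have gG := gamma_code_of_M ab v10 v1a v1b col_inM col_onto.
split => //.
- by rewrite Mcols card_imset // cardsT card_ord.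
- exact: (rank_code_of_M v10 v1a v1b col_onto).
by rewrite dd gG; congr Some; lia.
Qed.
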